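(* For each $j$ (indices mod $8g-4$), with $\ell$ denoting arc length on the unit circle: (i) there exist $a_j,b_j\in(P_j,Q_j)$ with $\ell(P_j,a_j)>\frac12\ell(P_j,Q_j)$ and $\ell(b_j,Q_j)>\frac12\ell(P_j,Q_j)$ such that $T_j(a_j)=P_{\rho(j)+1}$ and $T_{j-1}(b_j)=Q_{\theta(j-1)}$; (ii) for every $x\in[P_j,Q_j]$ with $\ell(P_j,x)\le\frac12\ell(P_j,Q_j)$, $T_j(x)\in[Q_{\sigma(j)+1},P_{\sigma(j)+2}]$; (iii) for every $x\in[P_j,Q_j]$ with $\ell(x,Q_j)\le\frac12\ell(P_j,Q_j)$, $T_{j-1}(x)\in[Q_{\theta(j-1)},P_{\theta(j-1)+1}]$.
   Context: Setting. Fix $g\ge 2$; indices are mod $8g-4$. Let $\mathcal F$ be the regular hyperbolic $(8g-4)$-gon in the unit disk centered at $0$ with all interior angles $\pi/2$, sides labeled $1,\dots,8g-4$ counterclockwise, side $i$ joining vertices $V_i$ and $V_{i+1}$. The complete geodesic extending side $i$ goes from $P_i$ (beyond $V_i$) to $Q_{i+1}$ (beyond $V_{i+1}$) on the unit circle; counterclockwise order $P_1,Q_1,P_2,Q_2,\dots,P_{8g-4},Q_{8g-4}$. $\sigma(i)=4g-i$ ($i$ odd), $\sigma(i)=2-i$ ($i$ even), $\rho(i)=\sigma(i)+1$, $\theta(i)=\sigma(i)-1$. $T_i$ is the Möbius transformation mapping side $i$ onto side $\sigma(i)$, with isometric circle the geodesic $P_iQ_{i+1}$, mapped onto the geodesic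 $Q_{\sigma(i)+1}P_{\sigma(i)}$, inside to outside. Arcs $[A,B]$, $(A,B)$ are counterclockwise from $A$ to $B$, and $\ell(A,B)$ is the arc length of $[A,B]$. *)

From Stdlib Require Import Reals ZArith Lra.
From Coquelicot Require Import Coquelicot.
Open Scope R_scope.

Definition Nsides (g : nat) : R := INR (8 * g - 4).

(** Side-pairing index maps on (representatives in Z of) indices mod 8g-4. *)
Definition sgm (g : nat) (i : Z) : Z :=
  if Z.odd i then (4 * Z.of_nat g - i)%Z else (2 - i)%Z.
Definition rh (g : nat) (i : Z) : Z := (sgm g i + 1)%Z.
Definition tht (g : nat) (i : Z) : Z := (sgm g i - 1)%Z.

Definition cis (t : R) : C := (cos t, sin t).

(** Placement of F: vertex V_k is in direction 2 pi (k-1)/N, so side i (joining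
    V_i and V_{i+1}) has its midpoint in direction phi_i = pi (2i-1)/N. *)
Definition phi (g : nat) (i : Z) : R := PI * (2 * IZR i - 1) / Nsides g.

(** The complete geodesic extending side i is the circle orthogonal to the unit
    circle with Euclidean center dist * e^{i phi_i} and radius rad, where
    dist^2 = 1 + rad^2; interior angles pi/2 (adjacent such circles orthogonal)
    force dist^2 * cos(2 pi / N) = 1.  Its endpoints are e^{i (phi_i -+ beta)}
    with cos beta = 1/dist. *)
Definition dist (g : nat) : R := / sqrt (cos (2 * PI / Nsides g)).
Definition rad (g : nat) : R := sqrt (dist g ^ 2 - 1).
Definition beta (g : nat) : R := acos (/ dist g).

(** P_i: endpoint of geodesic of side i beyond V_i;
    Q_{i+1}: endpoint of geodesic of side i beyond V_{i+1}. *)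
Definition Pend (g : nat) (i : Z) : C := cis (phi g i - beta g).
Definition Qend (g : nat) (i : Z) : C := cis (phi g (i - 1) + beta g).

(** T_i : the disk automorphism z |-> (a z + conj c)/(c z + conj a),
    |a|^2 - |c|^2 = 1, whose isometric circle |c z + conj a| = 1 is the
    geodesic P_i Q_{i+1} (center dist e^{i phi_i}, radius rad) and whose
    inverse has isometric circle the geodesic Q_{sigma(i)+1} P_{sigma(i)}
    (center dist e^{i phi_{sigma i}}); i.e. -conj a / c = dist e^{i phi_i},
    a / c = dist e^{i phi_{sigma i}}, |c| = 1/rad. *)
Definition Tcoef_a (g : nat) (i : Z) : C :=
  Cmult (RtoC (dist g / rad g))
        (cis ((PI - phi g i + phi g (sgm g i)) / 2)).
Definition Tcoef_c (g : nat) (i : Z) : C :=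
  Cmult (RtoC (/ rad g))
        (cis ((PI - phi g i - phi g (sgm g i)) / 2)).
Definition Tmap (g : nat) (i : Z) (z : C) : C :=
  Cdiv (Cplus (Cmult (Tcoef_a g i) z) (Cconj (Tcoef_c g i)))
       (Cplus (Cmult (Tcoef_c g i) z) (Cconj (Tcoef_a g i))).

(** Counterclockwise arc length ell(A,B) in [0, 2 pi) from A to B on the
    unit circle: the t with B = A e^{i t}. *)
Definition ell (A B : C) : R :=
  let w := Cmult (Cconj A) B in
  if Rle_dec 0 (Im w) then acos (Re w) else 2 * PI - acos (Re w).

Definition in_carc (A B x : C) : Prop := Cmod x = 1 /\ ell A x <= ell A B.
Definition in_oarc (A B x : C) : Prop :=
  Cmod x = 1 /\ 0 < ell A x /\ ell A x < ell A B.

(* Give the point cis (phi_i + 2 atan s) of the unit circle the coordinate s.  With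
   alpha = 2 pi / N, the geodesic of side i ends at phi_i -+ beta, where
   cos beta = sqrt (cos alpha).
   Up to rotations T_i is z |-> (1 - d z) / (d - z) with d = dist, which multiplies half-angle
   tangents on the circle by (d + 1) / (d - 1) = 1 / tan^2 (beta / 2); so in these coordinates
   T_i is s |-> s / tan^2 (beta / 2) followed by the rotation taking phi_i to phi_sigma(i) - pi.
   With gamma = alpha - beta / 2, all three claims then reduce to comparing arctangents, and
   finally to
     tan ((alpha - beta) / 2) tan gamma < tan^2 (beta / 2) < tan (alpha / 4) tan gamma,
   which hold because alpha <= pi / 6 pins beta between 0.70 alpha and 0.72 alpha. *)

From Pilot Require Import Defs.
From Stdlib Require Import Reals ZArith Lra Lia Psatz.
From Coquelicot Require Import Coquelicot.
Open Scope R_scope.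

Lemma cis_add x y : cis (x + y) = Cmult (cis x) (cis y).
Proof. unfold cis, Cmult; simpl. rewrite cos_plus, sin_plus. f_equal; ring. Qed.

Lemma cis_plus_PI x : cis (x + PI) = Copp (cis x).
Proof. unfold cis, Copp; simpl. rewrite neg_cos, neg_sin. reflexivity. Qed.

Lemma cis_minus_PI x : cis (x - PI) = Copp (cis x).
Proof. unfold cis, Copp; simpl. rewrite cos_minus, sin_minus, cos_PI, sin_PI. f_equal; ring. Qed.

Lemma cis_minus_2PI x : cis (x - 2 * PI) = cis x.
Proof. unfold cis. rewrite cos_minus, sin_minus, cos_2PI, sin_2PI. f_equal; ring. Qed.

Lemma Cconj_scal_cis r x : Cconj (Cmult (RtoC r) (cis x)) = Cmult (RtoC r) (cis (- x)).
Proof. unfold cis, Cconj, Cmult, RtoC; simpl. rewrite cos_neg, sin_neg. f_equal; ring. Qed.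

Lemma Cmod_cis x : Cmod (cis x) = 1.
Proof.
  unfold Cmod, cis; cbn [fst snd]. rewrite <- sqrt_1. f_equal.
  pose proof (sin2_cos2 x). unfold Rsqr in *. lra.
Qed.

Lemma cis_neq0 x : cis x <> 0%C.
Proof. intro H. pose proof (Cmod_cis x) as Hm. rewrite H, Cmod_0 in Hm. lra. Qed.

Lemma Cconj_cis_mult a b : Cmult (Cconj (cis a)) (cis b) = cis (b - a).
Proof. unfold cis, Cconj, Cmult; simpl. rewrite cos_minus, sin_minus. f_equal; ring. Qed.

Lemma ell_cis a b : 0 <= b - a < 2 * PI -> ell (cis a) (cis b) = b - a.
Proof.
  intros [h0 h1]. unfold ell. rewrite Cconj_cis_mult. unfold cis, Re, Im; simpl.
  set (th := b - a) in *.
  destruct (Rle_dec 0 (sin th)) as [Hs | Hs]; destruct (Rle_or_lt th PI) as [hp | hp].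
  - apply acos_cos; lra.
  - exfalso. assert (sin th < 0) by (apply sin_lt_0; lra). lra.
  - exfalso. assert (0 <= sin th) by (apply sin_ge_0; lra). lra.
  - replace (cos th) with (cos (2 * PI - th))
      by (rewrite cos_minus, cos_2PI, sin_2PI; ring).
    rewrite acos_cos by lra. ring.
Qed.

Lemma unit_circle_cis (w : C) : Cmod w = 1 -> exists th, 0 <= th < 2 * PI /\ w = cis th.
Proof.
  destruct w as [u v]. unfold Cmod; cbn [fst snd]. intro Hw.
  assert (Huv : u ^ 2 + v ^ 2 = 1).
  { rewrite <- (sqrt_sqrt (u ^ 2 + v ^ 2)) by nra. rewrite Hw. ring. }
  assert (Hu : -1 <= u <= 1) by nra.
  assert (Hsin : sqrt (1 - u²) = Rabs v).
  { replace (1 - u²) with (v²) by (unfold Rsqr; nra). apply sqrt_Rsqr_abs. }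
  pose proof (acos_bound u). pose proof PI_RGT_0.
  destruct (Rle_dec 0 v) as [Hv | Hv].
  - exists (acos u). split; [lra |].
    unfold cis. rewrite cos_acos, sin_acos, Hsin, Rabs_pos_eq by lra. reflexivity.
  - assert (0 < acos u).
    { destruct (Req_dec (acos u) 0) as [Hz | Hz]; [| lra].
      exfalso. assert (u = 1) by (rewrite <- (cos_acos u), Hz, cos_0 by lra; reflexivity).
      nra. }
    exists (2 * PI - acos u). split; [lra |].
    unfold cis. rewrite cos_minus, sin_minus, cos_2PI, sin_2PI, cos_acos, sin_acos, Hsin,
      Rabs_left by lra.
    f_equal; ring.
Qed.

Lemma in_carc_cis a b x : a <= x <= b -> b - a < 2 * PI -> in_carc (cis a) (cis b) (cis x).
Proof.
  intros Hx Hb. split; [apply Cmod_cis |]. rewrite !ell_cis by lra. lra.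
Qed.

Lemma in_oarc_cis a b x : a < x < b -> b - a < 2 * PI -> in_oarc (cis a) (cis b) (cis x).
Proof.
  intros Hx Hb. split; [apply Cmod_cis |]. rewrite !ell_cis by lra. lra.
Qed.

Lemma in_carc_cis_inv a b z : in_carc (cis a) (cis b) z -> 0 <= b - a < 2 * PI ->
  exists x, a <= x <= b /\ z = cis x.
Proof.
  intros [Hz Hle] Hab.
  assert (Hw : Cmod (Cmult (Cconj (cis a)) z) = 1)
    by now rewrite Cmod_mult, Cmod_conj, Cmod_cis, Hz, Rmult_1_l.
  destruct (unit_circle_cis _ Hw) as [th [Hth Hw_eq]].
  assert (Hz_eq : z = cis (a + th)).
  { rewrite cis_add, <- Hw_eq, Cmult_assoc.
    replace (Cmult (cis a) (Cconj (cis a))) with (RtoC 1); [ring |].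
    unfold cis, Cconj, Cmult, RtoC; simpl. pose proof (sin2_cos2 a). unfold Rsqr in *.
    f_equal; lra. }
  exists (a + th). split; [| exact Hz_eq].
  rewrite Hz_eq, !ell_cis in Hle by lra. lra.
Qed.

Lemma cos_2atan m : cos (2 * atan m) = (1 - m ^ 2) / (1 + m ^ 2).
Proof.
  rewrite cos_2a, cos_atan, sin_atan.
  assert (Hs := sqrt_sqrt (1 + m²) ltac:(unfold Rsqr; nra)).
  assert (0 < sqrt (1 + m²)) by (apply sqrt_lt_R0; unfold Rsqr; nra).
  replace (1 + m ^ 2) with (sqrt (1 + m²) * sqrt (1 + m²)) by (rewrite Hs; unfold Rsqr; ring).
  field. lra.
Qed.

Lemma sin_2atan m : sin (2 * atan m) = 2 * m / (1 + m ^ 2).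
Proof.
  rewrite sin_2a, cos_atan, sin_atan.
  assert (Hs := sqrt_sqrt (1 + m²) ltac:(unfold Rsqr; nra)).
  assert (0 < sqrt (1 + m²)) by (apply sqrt_lt_R0; unfold Rsqr; nra).
  replace (1 + m ^ 2) with (sqrt (1 + m²) * sqrt (1 + m²)) by (rewrite Hs; unfold Rsqr; ring).
  field. lra.
Qed.

Lemma blaschke_cis_2atan d s : 1 < d ->
  Cminus (RtoC 1) (Cmult (RtoC d) (cis (2 * atan s))) =
  Cmult (cis (2 * atan ((d + 1) / (d - 1) * s) - PI)) (Cminus (RtoC d) (cis (2 * atan s))).
Proof.
  intro hd. rewrite cis_minus_PI.
  unfold cis, Cminus, Cplus, Copp, Cmult, RtoC; simpl.
  rewrite !cos_2atan, !sin_2atan.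
  assert (0 < 1 + s ^ 2) by nra.
  assert (0 < (d - 1) ^ 2 + ((d + 1) * s) ^ 2) by nra.
  f_equal; field; repeat split; lra.
Qed.

Definition mobius (a c z : C) : C :=
  Cdiv (Cplus (Cmult a z) (Cconj c)) (Cplus (Cmult c z) (Cconj a)).

Lemma mobius_cis_2atan d c p q s : 1 < d -> c <> 0 ->
  mobius (Cmult (RtoC (d * c)) (cis ((PI - p + q) / 2))) (Cmult (RtoC c) (cis ((PI - p - q) / 2)))
    (cis (p + 2 * atan s))
  = cis (q - PI + 2 * atan ((d + 1) / (d - 1) * s)).
Proof.
  intros hd hc. unfold mobius. rewrite !Cconj_scal_cis, <- !Cmult_assoc, <- !cis_add.
  set (u := 2 * atan s). set (v := 2 * atan ((d + 1) / (d - 1) * s)).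
  set (e1 := (p + q) / 2 - PI / 2). set (e2 := (p - q) / 2 - PI / 2).
  replace ((PI - p + q) / 2 + (p + u)) with (e1 + u + PI) by (unfold e1; field).
  replace ((PI - p - q) / 2 + (p + u)) with (e2 + u + PI) by (unfold e2; field).
  replace (- ((PI - p - q) / 2)) with e1 by (unfold e1; field).
  replace (- ((PI - p + q) / 2)) with e2 by (unfold e2; field).
  replace (q - PI + v) with (q + (v - PI)) by ring.
  replace e1 with (q + e2) by (unfold e1, e2; field).
  rewrite !cis_plus_PI, !cis_add.
  assert (Hz : Cminus (RtoC d) (cis u) <> 0%C).
  { intro H. injection H as Hre _. pose proof (COS_bound u). lra. }
  assert (Hc : RtoC c <> 0%C) by (intro H; injection H; lra).
  pose proof (blaschke_cis_2atan d s hd) as Hb. fold u v in Hb.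
  rewrite RtoC_mult.
  transitivity (Cdiv (Cmult (Cmult (RtoC c) (Cmult (cis q) (cis e2)))
                            (Cminus (RtoC 1) (Cmult (RtoC d) (cis u))))
                     (Cmult (Cmult (RtoC c) (cis e2)) (Cminus (RtoC d) (cis u)))).
  { f_equal; ring. }
  rewrite Hb. field. split; [exact Hz | split; [apply cis_neq0 | exact Hc]].
Qed.

Lemma tan_le_compat x y : - PI / 2 < x -> x <= y -> y < PI / 2 -> tan x <= tan y.
Proof. intros hx [hxy | <-] hy; [left; apply tan_increasing |]; lra. Qed.

Lemma atan_le_compat x y : x <= y -> atan x <= atan y.
Proof. intros [hxy | <-]; [left; apply atan_increasing |]; lra. Qed.

Lemma atan_inv_tan x : 0 < x < PI / 2 -> atan (/ tan x) = PI / 2 - x.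
Proof.
  intro hx. rewrite atan_inv by (apply tan_gt_0; lra).
  rewrite atan_tan by lra. reflexivity.
Qed.

Local Ltac expand_taylor :=
  cbn [sum_f_R0 Nat.mul Nat.add pow];
  rewrite ?fact_simpl, ?mult_INR; cbn [Factorial.fact INR]; field.

Lemma cos_lb_poly x : cos_lb x = 1 - x ^ 2 / 2 + x ^ 4 / 24 - x ^ 6 / 720.
Proof. unfold cos_lb, cos_approx, cos_term. expand_taylor. Qed.

Lemma cos_ub_poly x : cos_ub x = 1 - x ^ 2 / 2 + x ^ 4 / 24 - x ^ 6 / 720 + x ^ 8 / 40320.
Proof. unfold cos_ub, cos_approx, cos_term. expand_taylor. Qed.

Lemma sin_lb_poly x : sin_lb x = x - x ^ 3 / 6 + x ^ 5 / 120 - x ^ 7 / 5040.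
Proof. unfold sin_lb, sin_approx, sin_term. expand_taylor. Qed.

Lemma PI_lt_16_5 : PI < 16 / 5.
Proof.
  destruct (Rlt_or_le PI (16 / 5)) as [h | h]; [exact h | exfalso].
  assert (Hub := proj2 (COS (8 / 5) ltac:(lra) ltac:(lra))).
  assert (0 <= cos (8 / 5)) by (apply cos_ge_0; lra).
  rewrite cos_ub_poly in Hub. lra.
Qed.

Lemma sin_ge_cubic x : 0 <= x <= 1 -> x - x ^ 3 / 6 <= sin x.
Proof.
  intro hx. pose proof PI2_3_2.
  assert (Hlb := proj1 (SIN x ltac:(lra) ltac:(lra))). rewrite sin_lb_poly in Hlb.
  assert (0 <= x ^ 5) by (apply pow_le; lra).
  assert (0 <= x ^ 5 * (1 - x ^ 2)) by (apply Rmult_le_pos; nra).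
  lra.
Qed.

Lemma cos_ge_quadratic x : 0 <= x <= 1 -> 1 - x ^ 2 / 2 <= cos x.
Proof.
  intro hx. pose proof PI2_3_2.
  assert (Hlb := proj1 (COS x ltac:(lra) ltac:(lra))). rewrite cos_lb_poly in Hlb.
  assert (0 <= x ^ 4) by (apply pow_le; lra).
  assert (0 <= x ^ 4 * (1 - x ^ 2)) by (apply Rmult_le_pos; nra).
  lra.
Qed.

Lemma tan_bounds x c : 0 <= x <= c -> c <= 1 ->
  x * (1 - c ^ 2 / 6) <= tan x /\ tan x * (1 - c ^ 2 / 2) <= x.
Proof.
  intros hx hc. pose proof PI2_3_2.
  pose proof (sin_ge_cubic x ltac:(lra)). pose proof (cos_ge_quadratic x ltac:(lra)).
  pose proof (COS_bound x).
  assert (Hcos : 1 - c ^ 2 / 2 <= cos x) by nra.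
  assert (1 / 2 <= 1 - c ^ 2 / 2) by nra.
  assert (0 <= sin x) by (apply sin_ge_0; lra).
  assert (sin x <= x).
  { destruct (Req_dec x 0) as [-> | ?]; [rewrite sin_0 | left; apply sin_lt_x]; lra. }
  assert (Htan : tan x * cos x = sin x) by (unfold tan; field; lra).
  assert (0 <= tan x) by nra.
  assert (x ^ 3 <= x * c ^ 2) by (replace (x ^ 3) with (x * x ^ 2) by ring;
                                   apply Rmult_le_compat_l; nra).
  split; nra.
Qed.

(* By cos (2 x) = 2 cos^2 x - 1 these say cos^2 (7/10 a) > cos a > cos^2 (18/25 a). *)
Lemma cos_double_bounds a : 0 < a <= 27 / 50 ->
  2 * cos a - 1 < cos (7 / 5 * a) /\ cos (36 / 25 * a) < 2 * cos a - 1.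
Proof.
  intro ha. pose proof PI2_3_2.
  destruct (COS a ltac:(lra) ltac:(lra)) as [Hal Hau].
  assert (Hbl := proj1 (COS (7 / 5 * a) ltac:(lra) ltac:(lra))).
  assert (Hcu := proj2 (COS (36 / 25 * a) ltac:(lra) ltac:(lra))).
  rewrite cos_lb_poly in Hal, Hbl. rewrite cos_ub_poly in Hau, Hcu.
  set (y := a ^ 2) in *.
  assert (0 < y <= 3 / 10) by (unfold y; nra).
  replace (a ^ 4) with (y ^ 2) in * by (unfold y; field).
  replace (a ^ 6) with (y ^ 3) in * by (unfold y; field).
  replace (a ^ 8) with (y ^ 4) in * by (unfold y; field).
  replace ((7 / 5 * a) ^ 2) with (49 / 25 * y) in * by (unfold y; field).
  replace ((7 / 5 * a) ^ 4) with ((49 / 25) ^ 2 * y ^ 2) in * by (unfold y; field).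
  replace ((7 / 5 * a) ^ 6) with ((49 / 25) ^ 3 * y ^ 3) in * by (unfold y; field).
  replace ((36 / 25 * a) ^ 2) with ((36 / 25) ^ 2 * y) in * by (unfold y; field).
  replace ((36 / 25 * a) ^ 4) with ((36 / 25) ^ 4 * y ^ 2) in * by (unfold y; field).
  replace ((36 / 25 * a) ^ 6) with ((36 / 25) ^ 6 * y ^ 3) in * by (unfold y; field).
  replace ((36 / 25 * a) ^ 8) with ((36 / 25) ^ 8 * y ^ 4) in * by (unfold y; field).
  split; nra.
Qed.

Lemma tan_half_sq_lt a b : 0 < a <= 27 / 50 -> 7 / 10 * a <= b <= 18 / 25 * a ->
  tan (b / 2) ^ 2 < tan (a / 4) * tan (a - b / 2).
Proof.
  intros ha hb.
  destruct (tan_bounds (b / 2) (1 / 5) ltac:(lra) ltac:(lra)) as [Hb0 Hb1].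
  destruct (tan_bounds (a / 4) (1 / 5) ltac:(lra) ltac:(lra)) as [Ha0 _].
  destruct (tan_bounds (a - b / 2) (9 / 25) ltac:(lra) ltac:(lra)) as [Hc0 _].
  nra.
Qed.

Lemma tan_half_sq_gt a b : 0 < a <= 27 / 50 -> 7 / 10 * a <= b <= 18 / 25 * a ->
  tan ((a - b) / 2) * tan (a - b / 2) < tan (b / 2) ^ 2.
Proof.
  intros ha hb.
  destruct (tan_bounds (b / 2) (1 / 5) ltac:(lra) ltac:(lra)) as [Hb0 _].
  destruct (tan_bounds ((a - b) / 2) (1 / 10) ltac:(lra) ltac:(lra)) as [Ha0 Ha1].
  destruct (tan_bounds (a - b / 2) (9 / 25) ltac:(lra) ltac:(lra)) as [Hc0 Hc1].
  nra.
Qed.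

Section Polygon.

Variable g : nat.
Hypothesis hg : (2 <= g)%nat.

Definition alpha : R := 2 * PI / Nsides g.
Definition tbeta : R := tan (beta g / 2).
Definition gamma : R := alpha - beta g / 2.

Lemma Nsides_ge_12 : 12 <= Nsides g.
Proof.
  unfold Nsides. rewrite minus_INR, mult_INR by lia.
  apply le_INR in hg. simpl in *. lra.
Qed.

Lemma phi_add i k : phi g (i + k) = phi g i + IZR k * alpha.
Proof. pose proof Nsides_ge_12. unfold phi, alpha. rewrite plus_IZR. field. lra. Qed.

Lemma phi_sub i k : phi g (i - k) = phi g i - IZR k * alpha.
Proof. pose proof Nsides_ge_12. unfold phi, alpha. rewrite minus_IZR. field. lra. Qed.

Lemma alpha_bounds : 0 < alpha <= 27 / 50.
Proof.
  pose proof Nsides_ge_12. pose proof PI_lt_16_5. pose proof PI_RGT_0.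
  unfold alpha. split.
  - apply Rdiv_lt_0_compat; lra.
  - apply Rle_div_l; lra.
Qed.

Lemma cos_alpha_bounds : 0 < cos alpha < 1.
Proof.
  pose proof alpha_bounds. pose proof PI2_3_2. split.
  - apply cos_gt_0; lra.
  - rewrite <- cos_0. apply cos_decreasing_1; lra.
Qed.

Lemma cos_beta : cos (beta g) = sqrt (cos alpha).
Proof.
  pose proof cos_alpha_bounds.
  assert (0 < sqrt (cos alpha)) by (apply sqrt_lt_R0; lra).
  assert (sqrt (cos alpha) < 1) by (rewrite <- sqrt_1; apply sqrt_lt_1; lra).
  unfold beta, Defs.dist. rewrite Rinv_inv. apply cos_acos. fold alpha. lra.
Qed.

Lemma cos_beta_bounds : 0 < cos (beta g) < 1.
Proof.
  pose proof cos_alpha_bounds. rewrite cos_beta. split.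
  - apply sqrt_lt_R0. lra.
  - rewrite <- sqrt_1. apply sqrt_lt_1; lra.
Qed.

Lemma beta_bounds : 7 / 10 * alpha <= beta g <= 18 / 25 * alpha.
Proof.
  pose proof alpha_bounds as Ha. pose proof cos_beta_bounds. pose proof PI2_3_2.
  destruct (cos_double_bounds alpha Ha) as [Hlo Hhi].
  assert (Hb : 0 <= beta g <= PI) by apply acos_bound.
  assert (Hsq : cos (beta g) * cos (beta g) = cos alpha)
    by (rewrite cos_beta; apply sqrt_sqrt; pose proof cos_alpha_bounds; lra).
  split.
  - destruct (Rle_or_lt (7 / 10 * alpha) (beta g)) as [h | h]; [exact h | exfalso].
    assert (cos (7 / 10 * alpha) < cos (beta g)) by (apply cos_decreasing_1; lra).
    assert (0 < cos (7 / 10 * alpha)) by (apply cos_gt_0; lra).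
    pose proof (cos_2a_cos (7 / 10 * alpha)) as E.
    replace (2 * (7 / 10 * alpha)) with (7 / 5 * alpha) in E by lra. nra.
  - destruct (Rle_or_lt (beta g) (18 / 25 * alpha)) as [h | h]; [exact h | exfalso].
    assert (cos (beta g) < cos (18 / 25 * alpha)) by (apply cos_decreasing_1; lra).
    pose proof (cos_2a_cos (18 / 25 * alpha)) as E.
    replace (2 * (18 / 25 * alpha)) with (36 / 25 * alpha) in E by lra. nra.
Qed.

Local Ltac angle_bounds :=
  pose proof alpha_bounds; pose proof beta_bounds; pose proof PI2_3_2.

Lemma gamma_bounds : 0 < gamma < PI / 2.
Proof. angle_bounds. unfold gamma. lra. Qed.

Lemma tbeta_pos : 0 < tbeta.
Proof. angle_bounds. apply tan_gt_0; lra. Qed.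

Lemma atan_tbeta : atan tbeta = beta g / 2.
Proof. angle_bounds. apply atan_tan; lra. Qed.

Lemma dist_gt_1 : 1 < Defs.dist g.
Proof.
  pose proof cos_beta_bounds. unfold Defs.dist. fold alpha. rewrite <- cos_beta, <- Rinv_1.
  apply Rinv_lt_contravar; lra.
Qed.

Lemma rad_pos : 0 < rad g.
Proof. pose proof dist_gt_1. unfold rad. apply sqrt_lt_R0. nra. Qed.

Lemma dist_ratio : (Defs.dist g + 1) / (Defs.dist g - 1) = / tbeta ^ 2.
Proof.
  pose proof tbeta_pos. pose proof cos_beta_bounds.
  assert (Hcos : cos (beta g) = (1 - tbeta ^ 2) / (1 + tbeta ^ 2)).
  { rewrite <- cos_2atan, atan_tbeta. f_equal. field. }
  unfold Defs.dist. fold alpha. rewrite <- cos_beta.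
  replace ((/ cos (beta g) + 1) / (/ cos (beta g) - 1)) with
    ((1 + cos (beta g)) / (1 - cos (beta g))) by (field; lra).
  assert (0 < 1 + tbeta ^ 2) by nra.
  rewrite Hcos. field. repeat split; nra.
Qed.

Lemma Tmap_cis_2atan i s :
  Tmap g i (cis (phi g i + 2 * atan s)) = cis (phi g (sgm g i) - PI + 2 * atan (s / tbeta ^ 2)).
Proof.
  pose proof dist_gt_1. pose proof rad_pos.
  change (Tmap g i) with (mobius (Tcoef_a g i) (Tcoef_c g i)).
  unfold Tcoef_a, Tcoef_c, Rdiv at 1.
  rewrite mobius_cis_2atan by (try apply Rinv_neq_0_compat; lra).
  rewrite dist_ratio. do 4 f_equal. unfold Rdiv. ring.
Qed.

Lemma atan_scaled_bounds s : tan (alpha / 4) <= s <= tbeta ->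
  PI / 2 - gamma <= atan (s / tbeta ^ 2) <= PI / 2 - beta g / 2.
Proof.
  intro hs. angle_bounds. pose proof tbeta_pos. pose proof gamma_bounds.
  assert (0 < tan gamma) by (apply tan_gt_0; lra).
  assert (0 < tbeta ^ 2) by (apply pow_lt; lra).
  pose proof (tan_half_sq_lt alpha (beta g) alpha_bounds beta_bounds) as Hsq.
  fold tbeta gamma in Hsq.
  split.
  - rewrite <- atan_inv_tan by lra. apply atan_le_compat.
    apply Rle_div_r; [lra |]. rewrite Rmult_comm, <- Rdiv_def.
    apply Rle_div_l; [lra |]. nra.
  - rewrite <- atan_inv_tan by lra. fold tbeta. apply atan_le_compat.
    apply Rle_div_l; [lra |]. replace (/ tbeta * tbeta ^ 2) with tbeta by (field; lra). lra.
Qed.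

Lemma atan_witness_bounds : (alpha - beta g) / 2 < atan (tbeta ^ 2 / tan gamma) < alpha / 4.
Proof.
  angle_bounds. pose proof gamma_bounds.
  assert (0 < tan gamma) by (apply tan_gt_0; lra).
  split.
  - rewrite <- (atan_tan ((alpha - beta g) / 2)) by lra. apply atan_increasing.
    apply (Rlt_div_r _ _ (tan gamma)); [lra |].
    exact (tan_half_sq_gt alpha (beta g) alpha_bounds beta_bounds).
  - rewrite <- (atan_tan (alpha / 4)) by lra. apply atan_increasing.
    apply (Rlt_div_l _ _ (tan gamma)); [lra |].
    exact (tan_half_sq_lt alpha (beta g) alpha_bounds beta_bounds).
Qed.

Lemma Qend_phi i : Qend g i = cis (phi g i - alpha + beta g).
Proof. unfold Qend. rewrite phi_sub. f_equal. ring. Qed.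

Lemma ell_Pend_Qend j : ell (Pend g j) (Qend g j) = 2 * beta g - alpha.
Proof. angle_bounds. rewrite Qend_phi. unfold Pend. rewrite ell_cis by lra. ring. Qed.

Lemma Tmap_witnesses j : exists a b : C,
  in_oarc (Pend g j) (Qend g j) a /\ in_oarc (Pend g j) (Qend g j) b /\
  ell (Pend g j) a > ell (Pend g j) (Qend g j) / 2 /\
  ell b (Qend g j) > ell (Pend g j) (Qend g j) / 2 /\
  Tmap g j a = Pend g (rh g j + 1) /\
  Tmap g (j - 1) b = Qend g (tht g (j - 1)).
Proof.
  angle_bounds. pose proof gamma_bounds. pose proof tbeta_pos.
  assert (0 < tan gamma) by (apply tan_gt_0; lra).
  set (w := tbeta ^ 2 / tan gamma).
  destruct atan_witness_bounds as [Hw1 Hw2]. fold w in Hw1, Hw2.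
  assert (Hw : atan (w / tbeta ^ 2) = PI / 2 - gamma).
  { rewrite <- atan_inv_tan by lra. f_equal. unfold w. field. lra. }
  exists (cis (phi g j + 2 * atan (- w))), (cis (phi g (j - 1) + 2 * atan w)).
  rewrite !Tmap_cis_2atan, ell_Pend_Qend, Rdiv_opp_l, !atan_opp, Hw, !Qend_phi.
  unfold Pend, rh, tht. rewrite !phi_add, !phi_sub.
  replace (phi g (sgm g j) - PI + 2 * - (PI / 2 - gamma))
    with (phi g (sgm g j) + 1 * alpha + 1 * alpha - beta g - 2 * PI) by (unfold gamma; field).
  rewrite cis_minus_2PI.
  split; [apply in_oarc_cis; lra |]. split; [apply in_oarc_cis; lra |].
  rewrite !ell_cis by lra.
  repeat split; try lra. f_equal. unfold gamma. field.
Qed.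

Lemma Tmap_near_Pend j x : in_carc (Pend g j) (Qend g j) x ->
  ell (Pend g j) x <= ell (Pend g j) (Qend g j) / 2 ->
  in_carc (Qend g (sgm g j + 1)) (Pend g (sgm g j + 2)) (Tmap g j x).
Proof.
  angle_bounds. intros Hx Hhalf. rewrite ell_Pend_Qend in Hhalf.
  rewrite !Qend_phi in *. unfold Pend in *.
  destruct (in_carc_cis_inv _ _ _ Hx ltac:(lra)) as [th [Hth ->]].
  rewrite ell_cis in Hhalf by lra.
  set (s := tan ((phi g j - th) / 2)).
  replace th with (phi g j + 2 * atan (- s))
    by (unfold s; rewrite atan_opp, atan_tan by lra; field).
  destruct (atan_scaled_bounds s) as [Hlo Hhi].
  { unfold s, tbeta. split; apply tan_le_compat; lra. }
  rewrite Tmap_cis_2atan, !phi_add, Rdiv_opp_l, atan_opp.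
  replace (phi g (sgm g j) - PI + 2 * - atan (s / tbeta ^ 2))
    with (phi g (sgm g j) + PI - 2 * atan (s / tbeta ^ 2) - 2 * PI) by ring.
  rewrite cis_minus_2PI. apply in_carc_cis; unfold gamma in *; lra.
Qed.

Lemma Tmap_near_Qend j x : in_carc (Pend g j) (Qend g j) x ->
  ell x (Qend g j) <= ell (Pend g j) (Qend g j) / 2 ->
  in_carc (Qend g (tht g (j - 1))) (Pend g (tht g (j - 1) + 1)) (Tmap g (j - 1) x).
Proof.
  angle_bounds. intros Hx Hhalf. rewrite ell_Pend_Qend in Hhalf.
  rewrite !Qend_phi in *. unfold Pend, tht in *.
  destruct (in_carc_cis_inv _ _ _ Hx ltac:(lra)) as [th [Hth ->]].
  rewrite ell_cis in Hhalf by lra.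
  set (s := tan ((th - phi g (j - 1)) / 2)).
  assert (Hphi : phi g (j - 1) = phi g j - alpha) by (rewrite phi_sub; ring).
  replace th with (phi g (j - 1) + 2 * atan s)
    by (unfold s; rewrite atan_tan, Hphi by lra; field).
  destruct (atan_scaled_bounds s) as [Hlo Hhi].
  { unfold s, tbeta. rewrite Hphi. split; apply tan_le_compat; lra. }
  rewrite Tmap_cis_2atan, phi_add, !phi_sub.
  apply in_carc_cis; unfold gamma in *; lra.
Qed.

End Polygon.

Theorem corollary8p2 (g : nat) (hg : (2 <= g)%nat) (j : Z) :
  (exists a b : C,
      in_oarc (Pend g j) (Qend g j) a /\ in_oarc (Pend g j) (Qend g j) b /\
      ell (Pend g j) a > ell (Pend g j) (Qend g j) / 2 /\
      ell b (Qend g j) > ell (Pend g j) (Qend g j) / 2 /\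
      Tmap g j a = Pend g (rh g j + 1) /\
      Tmap g (j - 1) b = Qend g (tht g (j - 1)))
  /\
  (forall x : C, in_carc (Pend g j) (Qend g j) x ->
      ell (Pend g j) x <= ell (Pend g j) (Qend g j) / 2 ->
      in_carc (Qend g (sgm g j + 1)) (Pend g (sgm g j + 2)) (Tmap g j x))
  /\
  (forall x : C, in_carc (Pend g j) (Qend g j) x ->
      ell x (Qend g j) <= ell (Pend g j) (Qend g j) / 2 ->
      in_carc (Qend g (tht g (j - 1))) (Pend g (tht g (j - 1) + 1)) (Tmap g (j - 1) x)).
Proof.
  split; [| split].
  - exact (Tmap_witnesses g hg j).
  - exact (Tmap_near_Pend g hg j).
  - exact (Tmap_near_Qend g hg j).
Qed.
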